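(* Let $n,m$ be positive integers, $A\in\mathbb{R}^{n\times n}$, $B\in\mathbb{R}^{m\times n}$, and let $p:\mathbb{R}^n_+\to\mathbb{R}^n_+$, $c:\mathbb{R}^n_+\to\mathbb{R}^n_+$, $r:\mathbb{R}^m_+\to\mathbb{R}^m_+$ be maps. Put $\Omega=\mathbb{R}^n_+\times\mathbb{R}^n_+\times\mathbb{R}^m_+$ and define $g:\Omega\to\mathbb{R}^{2n+m}$ by $$g(x,\lambda,v)=\big((I-A)^T\lambda-p(x)-B^Tv;\ c(\lambda)-(I-A)x;\ Bx-r(v)\big).$$ For $y^*=(x^*,\lambda^*,v^* )\in\Omega$ the following are equivalent: (i) $x^*\in\operatorname{argmin}\{\langle p(x^* ),X\rangle : (I-A)X\ge c(\lambda^* ),\ BX\le r(v^* ),\ X\in\mathbb{R}^n_+\}$ and $(\lambda^*,v^* )\in\operatorname{argmax}\{\langle c(\lambda^* ),\Lambda\rangle-\langle r(v^* ),V\rangle : (I-A)^T\Lambda-B^TV\le p(x^* ),\ \Lambda\in\mathbb{R}^n_+,\ V\in\mathbb{R}^m_+\}$; (ii) $\langle g(y^* ),y-y^*\rangle\le 0$ for all $y\in\Omega$.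
   Context: Standing assumptions of the paper: $A$ (the balance matrix) has no zero rows and columns and is productive, i.e. for every $c\in\mathbb{R}^n_+$ the system $x-Ax=c$ has a solution $x\in\mathbb{R}^n_+$; $B$ (the technological matrix) has no zero row and no zero column. Vector inequalities are componentwise and $\langle\cdot,\cdot\rangle$ is the Euclidean inner product. A triple $y^*$ satisfying (i) is called a nonlinear production–consumption equilibrium (NPCE). *)

From HB Require Import structures.
From mathcomp Require Import all_boot all_order all_algebra.
From mathcomp Require Import reals.
Set Implicit Arguments. Unset Strict Implicit. Unset Printing Implicit Defensive.
Import Order.TTheory GRing.Theory Num.Theory.
Local Open Scope ring_scope.

Section Defs.
Variable R : realType.

Definition nonnegv {k} (v : 'cV[R]_k) : Prop := forall i, 0 <= v i 0.

Definition lev {k} (u v : 'cV[R]_k) : Prop := forall i, u i 0 <= v i 0.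

Definition dotv {k} (u v : 'cV[R]_k) : R := \sum_(i < k) u i 0 * v i 0.

Definition dot3 {n m} (a b : 'cV[R]_n * 'cV[R]_n * 'cV[R]_m) : R :=
  dotv a.1.1 b.1.1 + dotv a.1.2 b.1.2 + dotv a.2 b.2.

Definition no_zero_rows {k l} (M : 'M[R]_(k, l)) : Prop :=
  forall i, exists j, M i j != 0.
Definition no_zero_cols {k l} (M : 'M[R]_(k, l)) : Prop :=
  forall j, exists i, M i j != 0.
Definition productive {n} (A : 'M[R]_n) : Prop :=
  forall c : 'cV[R]_n, nonnegv c ->
    exists x : 'cV[R]_n, nonnegv x /\ x - A *m x = c.

(* maps R^k_+ -> R^k_+ (represented as total maps with the range condition
   required on the nonnegative orthant) *)
Definition maps_orthant {k l} (f : 'cV[R]_k -> 'cV[R]_l) : Prop :=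
  forall x, nonnegv x -> nonnegv (f x).

Definition gmap {n m} (A : 'M[R]_n) (B : 'M[R]_(m, n))
  (p c : 'cV[R]_n -> 'cV[R]_n) (r : 'cV[R]_m -> 'cV[R]_m)
  (y : 'cV[R]_n * 'cV[R]_n * 'cV[R]_m) : 'cV[R]_n * 'cV[R]_n * 'cV[R]_m :=
  let: (x, lam, v) := y in
  ((1%:M - A)^T *m lam - p x - B^T *m v,
   c lam - (1%:M - A) *m x,
   B *m x - r v).

Definition in_Omega {n m} (y : 'cV[R]_n * 'cV[R]_n * 'cV[R]_m) : Prop :=
  nonnegv y.1.1 /\ nonnegv y.1.2 /\ nonnegv y.2.

Definition primal_feasible {n m} (A : 'M[R]_n) (B : 'M[R]_(m, n))
  (cc : 'cV[R]_n) (rr : 'cV[R]_m) (X : 'cV[R]_n) : Prop :=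
  lev cc ((1%:M - A) *m X) /\ lev (B *m X) rr /\ nonnegv X.

Definition primal_argmin {n m} (A : 'M[R]_n) (B : 'M[R]_(m, n))
  (pp cc : 'cV[R]_n) (rr : 'cV[R]_m) (Xs : 'cV[R]_n) : Prop :=
  primal_feasible A B cc rr Xs /\
  forall X, primal_feasible A B cc rr X -> dotv pp Xs <= dotv pp X.

Definition dual_feasible {n m} (A : 'M[R]_n) (B : 'M[R]_(m, n))
  (pp : 'cV[R]_n) (L : 'cV[R]_n) (V : 'cV[R]_m) : Prop :=
  lev ((1%:M - A)^T *m L - B^T *m V) pp /\ nonnegv L /\ nonnegv V.

Definition dual_argmax {n m} (A : 'M[R]_n) (B : 'M[R]_(m, n))
  (pp cc : 'cV[R]_n) (rr : 'cV[R]_m) (Ls : 'cV[R]_n) (Vs : 'cV[R]_m) : Prop :=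
  dual_feasible A B pp Ls Vs /\
  forall L V, dual_feasible A B pp L V ->
    dotv cc L - dotv rr V <= dotv cc Ls - dotv rr Vs.

End Defs.

From HB Require Import structures.
From mathcomp Require Import all_boot all_order all_algebra.
From mathcomp Require Import reals lra.
Set Implicit Arguments. Unset Strict Implicit. Unset Printing Implicit Defensive.
Import Order.TTheory GRing.Theory Num.Theory.
Local Open Scope ring_scope.

(* Condition (ii) is a variational inequality over the product of orthants
   Omega, so it holds iff g(y* ) <= 0 componentwise and <g(y* ), y* > = 0.
   The three sign conditions are primal and dual feasibility, and
   <g(y* ), y* > = <c, lambda* > - <r, v* > - <p, x* > is minus the duality gap.
   By weak and strong duality of linear programming, (i) says exactly the same:
   both points are feasible and the gap vanishes.  Strong duality comes from
   Farkas' lemma, proved by Fourier-Motzkin elimination. *)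

Section LinearInequalities.
Variable R : realType.

Lemma dotvC k (u v : 'cV[R]_k) : dotv u v = dotv v u.
Proof. by apply: eq_bigr => i _; rewrite mulrC. Qed.

Lemma dotvDl k (u v w : 'cV[R]_k) : dotv (u + v) w = dotv u w + dotv v w.
Proof. by rewrite /dotv -big_split; apply: eq_bigr => i _; rewrite mxE mulrDl. Qed.

Lemma dotvNl k (u v : 'cV[R]_k) : dotv (- u) v = - dotv u v.
Proof. by rewrite /dotv -sumrN; apply: eq_bigr => i _; rewrite mxE mulNr. Qed.

Lemma dotvBl k (u v w : 'cV[R]_k) : dotv (u - v) w = dotv u w - dotv v w.
Proof. by rewrite dotvDl dotvNl. Qed.

Lemma dotvZl k a (u v : 'cV[R]_k) : dotv (a *: u) v = a * dotv u v.
Proof. by rewrite /dotv mulr_sumr; apply: eq_bigr => i _; rewrite mxE mulrA. Qed.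

Lemma dotv0l k (u : 'cV[R]_k) : dotv 0 u = 0.
Proof. by rewrite -(scale0r 0) dotvZl mul0r. Qed.

Lemma dotvDr k (u v w : 'cV[R]_k) : dotv u (v + w) = dotv u v + dotv u w.
Proof. by rewrite dotvC dotvDl !(dotvC u). Qed.

Lemma dotvBr k (u v w : 'cV[R]_k) : dotv u (v - w) = dotv u v - dotv u w.
Proof. by rewrite dotvC dotvBl !(dotvC u). Qed.

Lemma dotvZr k a (u v : 'cV[R]_k) : dotv u (a *: v) = a * dotv u v.
Proof. by rewrite dotvC dotvZl dotvC. Qed.

Lemma dotv0r k (u : 'cV[R]_k) : dotv u 0 = 0.
Proof. by rewrite dotvC dotv0l. Qed.

Lemma dotv_suml (I : finType) k (F : I -> 'cV[R]_k) v :
  dotv (\sum_i F i) v = \sum_i dotv (F i) v.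
Proof.
by elim/big_rec2: _ => [|i x y _ <-]; rewrite ?dotv0l ?dotvDl.
Qed.

Lemma dotv_trmx k l (M : 'M[R]_(k, l)) u v : dotv (M^T *m u) v = dotv u (M *m v).
Proof.
rewrite /dotv; under eq_bigr do rewrite mxE big_distrl /=.
rewrite exchange_big; apply: eq_bigr => j _; rewrite mxE big_distrr.
by apply: eq_bigr => i _; rewrite !mxE /= mulrA [u j 0 * _]mulrC.
Qed.

Lemma dotv_col_mx k l (u : 'cV[R]_k) (v : 'cV[R]_l) z :
  dotv (col_mx u v) z = dotv u (usubmx z) + dotv v (dsubmx z).
Proof.
rewrite /dotv big_split_ord; congr (_ + _); apply: eq_bigr => i _.
  by rewrite col_mxEu mxE.
by rewrite col_mxEd mxE.
Qed.

Lemma dotv1 (u v : 'cV[R]_1) : dotv u v = u 0 0 * v 0 0.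
Proof. by rewrite /dotv big_ord1. Qed.

Lemma dotv_col_const k a (v : 'cV[R]_k) (z : 'cV[R]_(1 + k)) :
  dotv (col_mx (const_mx a) v) z = a * usubmx z 0 0 + dotv v (dsubmx z).
Proof. by rewrite dotv_col_mx dotv1 mxE. Qed.

Lemma dotv_row k l (M : 'M[R]_(k, l)) i v : dotv (row i M)^T v = (M *m v) i 0.
Proof. by rewrite mxE; apply: eq_bigr => j _; rewrite !mxE. Qed.

Lemma sum_scale_row k l (M : 'M[R]_(k, l)) (f : 'I_k -> R) :
  \sum_i f i *: (row i M)^T = M^T *m \col_i f i.
Proof.
rewrite -[M^T *m _]trmxK trmx_mul trmxK mulmx_sum_row linear_sum /=.
by apply: eq_bigr => i _; rewrite linearZ !mxE.
Qed.

Lemma dotv_col k (u : 'cV[R]_k) (f : 'I_k -> R) :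
  dotv u (\col_i f i) = \sum_i f i * u i 0.
Proof. by apply: eq_bigr => i _; rewrite mxE mulrC. Qed.

Lemma dotv_le k (u w x : 'cV[R]_k) : lev u w -> nonnegv x -> dotv u x <= dotv w x.
Proof. by move=> uw x0; apply: ler_sum => i _; apply: ler_wpM2r. Qed.

Lemma dotv_delta k (u : 'cV[R]_k) j : dotv u (delta_mx j 0) = u j 0.
Proof.
rewrite /dotv (bigD1 j) //= mxE !eqxx mulr1 big1 ?addr0 // => i /negbTE ij.
by rewrite mxE ij mulr0.
Qed.

Lemma finite_sandwich (I : finType) (P Q : pred I) (lo up : I -> R) :
  (forall i j, P i -> Q j -> lo i <= up j) ->
  exists t, (forall i, P i -> lo i <= t) /\ (forall j, Q j -> t <= up j).
Proof.
move=> lo_up; case: (pickP P) => [i0 Pi0 | noP].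
  case: (arg_maxP lo Pi0) => i Pi max_i.
  by exists (lo i); split => [i' /max_i | j /(lo_up _ _ Pi)].
case: (pickP Q) => [j0 Qj0 | noQ].
  case: (arg_minP up Qj0) => j Qj min_j.
  by exists (up j); split => [i' | j' /min_j //]; rewrite noP.
by exists 0; split => i; rewrite ?noP ?noQ.
Qed.

Section FourierMotzkin.
Variables (N : nat) (I : finType) (a : I -> 'cV[R]_(1 + N)) (b : I -> R).

Let lead i := usubmx (a i) 0 0.

(* Index [inl i] keeps an inequality not involving the first variable;
   [inr (i, j)] cancels that variable between an upper bound [i] and a lower
   bound [j]. *)
Definition fm_weight (k : I + I * I) (l : I) : R :=
  match k with
  | inl i => ((lead i == 0) && (l == i))%:R
  | inr (i, j) => if (0 < lead i) && (lead j < 0)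
                  then - lead j * (l == i)%:R + lead i * (l == j)%:R else 0
  end.

Lemma fm_weight_ge0 k l : 0 <= fm_weight k l.
Proof.
case: k => [i | [i j]] /=; first exact: ler0n.
case: ifP => [/andP[li lj] | _] //.
by apply: addr_ge0; apply: mulr_ge0; rewrite ?ler0n ?oppr_ge0 ?ltW.
Qed.

Lemma fm_combE (V : lmodType R) (F : I -> V) k :
  \sum_l fm_weight k l *: F l =
  match k with
  | inl i => if lead i == 0 then F i else 0
  | inr (i, j) => if (0 < lead i) && (lead j < 0)
                  then - lead j *: F i + lead i *: F j else 0
  end.
Proof.
have sum_dirac i : \sum_l (l == i)%:R *: F l = F i.
  by rewrite (bigD1 i) //= eqxx scale1r big1 ?addr0 // => l /negbTE ->; rewrite scale0r.
case: k => [i | [i j]] /=.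
  by case: eqP => _; [exact: sum_dirac | rewrite big1 // => l _; rewrite scale0r].
case: ifP => _; last by rewrite big1 // => l _; rewrite scale0r.
under eq_bigr do rewrite scalerDl -!scalerA.
by rewrite big_split /= -!scaler_sumr !sum_dirac.
Qed.

Definition fm_coef k : 'cV[R]_N := dsubmx (\sum_l fm_weight k l *: a l).
Definition fm_rhs k : R := \sum_l fm_weight k l * b l.

Lemma fm_rhsE k :
  fm_rhs k =
  match k with
  | inl i => if lead i == 0 then b i else 0
  | inr (i, j) => if (0 < lead i) && (lead j < 0)
                  then - lead j * b i + lead i * b j else 0
  end.
Proof. exact: (fm_combE (b : I -> R^o)). Qed.

Lemma fm_comb k : \sum_l fm_weight k l *: a l = col_mx 0 (fm_coef k).
Proof.
rewrite -[LHS]vsubmxK; congr col_mx; apply/matrixP => i j; rewrite !ord1 fm_combE.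
case: k => [i' | [i' j']] /=.
  by rewrite [RHS]mxE; case: eqP => // _; rewrite linear0 mxE.
rewrite [RHS]mxE; case: ifP => _; last by rewrite linear0 mxE.
rewrite linearD !linearZ [LHS]mxE [X in X + _]mxE [X in _ + X]mxE /=.
by rewrite mulNr mulrC addNr.
Qed.

Lemma fm_lift : (exists x, forall k, dotv (fm_coef k) x <= fm_rhs k) ->
  exists z, forall i, dotv (a i) z <= b i.
Proof.
move=> [x x_sol].
pose slack i := b i - dotv (dsubmx (a i)) x.
have slack_lead0 i : lead i = 0 -> 0 <= slack i.
  move=> li0; have := x_sol (inl i).
  by rewrite /fm_coef fm_combE fm_rhsE /= li0 eqxx subr_ge0.
have slack_pair j i : lead j < 0 -> 0 < lead i -> slack j / lead j <= slack i / lead i.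
  move=> lj li; have := x_sol (inr (i, j)).
  rewrite /fm_coef fm_combE fm_rhsE /= li lj /= linearD !linearZ /= dotvDl !dotvZl => h.
  rewrite ler_ndivrMr // mulrAC ler_pdivrMr // /slack; nra.
have [t [t_lo t_up]] :=
  @finite_sandwich _ (fun j => lead j < 0) (fun i => 0 < lead i) _ _ slack_pair.
exists (col_mx (const_mx t) x) => i.
rewrite -[a i]vsubmxK dotv_col_mx col_mxKu col_mxKd dotv1 -/(lead i) mxE.
suff : lead i * t <= slack i by rewrite /slack; lra.
case: (ltrgtP (lead i) 0) => [li | li | li0].
- by have := t_lo i li; rewrite ler_ndivrMr // mulrC.
- by have := t_up i li; rewrite ler_pdivlMr // mulrC.
- by rewrite li0 mul0r slack_lead0.
Qed.

Lemma fm_comb_pullback (y : I + I * I -> R) :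
  \sum_l (\sum_k y k * fm_weight k l) *: a l = col_mx 0 (\sum_k y k *: fm_coef k).
Proof.
under eq_bigr do rewrite scaler_suml.
rewrite exchange_big /=.
under eq_bigr do under eq_bigr do rewrite -scalerA.
under eq_bigr do rewrite -scaler_sumr fm_comb.
elim/big_rec2: _ => [|k u v _ ->]; first by rewrite col_mx0.
by rewrite scale_col_mx add_col_mx scaler0 addr0.
Qed.

Lemma fm_rhs_pullback (y : I + I * I -> R) :
  \sum_l (\sum_k y k * fm_weight k l) * b l = \sum_k y k * fm_rhs k.
Proof.
under eq_bigr do rewrite mulr_suml.
rewrite exchange_big; apply: eq_bigr => k _.
by rewrite mulr_sumr; apply: eq_bigr => l _; rewrite mulrA.
Qed.

End FourierMotzkin.

Theorem farkas N (I : finType) (a : I -> 'cV[R]_N) (b : I -> R) :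
  ~ (exists x, forall i, dotv (a i) x <= b i) ->
  exists y : I -> R,
    [/\ forall i, 0 <= y i, \sum_i y i *: a i = 0 & \sum_i y i * b i < 0].
Proof.
elim: N I a b => [|N IH] I a b infeasible.
  have /forallPn[i] : ~~ [forall i, 0 <= b i].
    by apply/negP => /forallP b_ge0; apply: infeasible; exists 0 => i; rewrite dotv0r.
  rewrite -ltNge => bi_lt0; exists (fun l => (l == i)%:R); split => [l||].
  - exact: ler0n.
  - exact: flatmx0.
  - by rewrite (bigD1 i) //= eqxx mul1r big1 ?addr0 // => l /negbTE ->; rewrite mul0r.
have reduced_infeasible :
    ~ exists x, forall k, dotv (@fm_coef N _ a k) x <= fm_rhs a b k.
  by move=> /(@fm_lift N) /infeasible.
have [y [y_ge0 y_comb y_rhs]] := IH _ _ _ reduced_infeasible.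
exists (fun l => \sum_k y k * fm_weight a k l); split.
- by move=> l; apply: sumr_ge0 => k _; exact: mulr_ge0 (y_ge0 k) (fm_weight_ge0 _ _ _).
- by rewrite (@fm_comb_pullback N) y_comb col_mx0.
- by rewrite fm_rhs_pullback.
Qed.

Section Homogenization.
Variables (N : nat) (I : finType) (a : I -> 'cV[R]_N) (b : I -> R) (c x0 : 'cV[R]_N).
Hypothesis x0_feas : forall i, dotv (a i) x0 <= b i.
Hypothesis x0_opt : forall x, (forall i, dotv (a i) x <= b i) -> dotv c x <= dotv c x0.

(* For z = (t, x) the rows say a_i.x <= b_i t, t >= 0 and c.x >= (c.x0) t + 1;
   a solution would make (x0 + x) / (1 + t) a feasible point beating x0. *)
Definition hom_coef (k : I + bool) : 'cV[R]_(1 + N) :=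
  match k with
  | inl i => col_mx (const_mx (- b i)) (a i)
  | inr false => col_mx (const_mx (-1)) 0
  | inr true => col_mx (const_mx (dotv c x0)) (- c)
  end.

Definition hom_rhs (k : I + bool) : R := if k is inr true then -1 else 0.

Lemma hom_infeasible : ~ exists z, forall k, dotv (hom_coef k) z <= hom_rhs k.
Proof.
move=> [z z_sol]; pose t := usubmx z 0 0; pose x := dsubmx z.
have x_feas i : dotv (a i) x <= b i * t.
  by have := z_sol (inl i); rewrite dotv_col_const -/t -/x /=; lra.
have t_ge0 : 0 <= t.
  by have := z_sol (inr false); rewrite dotv_col_const -/t -/x /= dotv0l; lra.
have x_obj : dotv c x0 * t + 1 <= dotv c x.
  by have := z_sol (inr true); rewrite dotv_col_const -/t -/x /= dotvNl; lra.
have : dotv c ((1 + t)^-1 *: (x0 + x)) <= dotv c x0.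
  apply: x0_opt => i; rewrite dotvZr dotvDr ler_pdivrMl; last lra.
  by have := x_feas i; have := x0_feas i; lra.
rewrite dotvZr dotvDr ler_pdivrMl; lra.
Qed.

Lemma hom_comb_tail (y : I + bool -> R) :
  dsubmx (\sum_k y k *: hom_coef k) = \sum_i y (inl i) *: a i - y (inr true) *: c.
Proof.
rewrite linear_sum big_sumType big_bool /=.
under eq_bigr do rewrite linearZ /= col_mxKd.
by rewrite !linearZ /= !col_mxKd linear0 addr0 scalerN.
Qed.

Lemma hom_comb_head (y : I + bool -> R) :
  usubmx (\sum_k y k *: hom_coef k) 0 0 =
  y (inr true) * dotv c x0 - y (inr false) - \sum_i y (inl i) * b i.
Proof.
rewrite linear_sum big_sumType big_bool /=.
under eq_bigr do rewrite linearZ /= col_mxKu scalemx_const.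
rewrite !linearZ /= !col_mxKu !scalemx_const -raddf_sum -!raddfD mxE.
rewrite (eq_bigr (fun i => - (y (inl i) * b i))) ?sumrN; first lra.
by move=> i _; rewrite mulrN.
Qed.

Lemma optimum_multipliers : exists y : I -> R,
  [/\ forall i, 0 <= y i, \sum_i y i *: a i = c & \sum_i y i * b i <= dotv c x0].
Proof.
have [y [y_ge0 y_comb y_rhs]] := farkas hom_infeasible.
have yT_gt0 : 0 < y (inr true).
  by move: y_rhs; rewrite big_sumType big_bool /= big1 => [|i _]; rewrite ?mulr0 //; lra.
have /eqP := congr1 dsubmx y_comb; rewrite hom_comb_tail linear0 subr_eq0 => /eqP comb_eq.
have := congr1 (fun v => usubmx v 0 0) y_comb; rewrite /= hom_comb_head linear0 mxE => rhs_eq.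
exists (fun i => y (inl i) / y (inr true)); split.
- by move=> i; rewrite divr_ge0 ?y_ge0 ?ltW.
- under eq_bigr do rewrite mulrC -scalerA.
  by rewrite -scaler_sumr comb_eq scalerA mulVf ?scale1r ?gt_eqF.
- under eq_bigr do rewrite mulrAC.
  rewrite -mulr_suml ler_pdivrMr //.
  by have := y_ge0 (inr false); lra.
Qed.

End Homogenization.

Section LinearProgram.
Variables (n m : nat) (A : 'M[R]_n) (B : 'M[R]_(m, n)).
Variables (pp cc : 'cV[R]_n) (rr : 'cV[R]_m).

Lemma weak_duality X L V :
  primal_feasible A B cc rr X -> dual_feasible A B pp L V ->
  dotv cc L - dotv rr V <= dotv pp X.
Proof.
move=> [cX [BX X_ge0]] [dualLV [L_ge0 V_ge0]].
have := dotv_le dualLV X_ge0; rewrite dotvBl !dotv_trmx (dotvC L) (dotvC V).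
by have := dotv_le cX L_ge0; have := dotv_le BX V_ge0; lra.
Qed.

Definition primal_coef (k : 'I_n + 'I_m + 'I_n) : 'cV[R]_n :=
  match k with
  | inl (inl i) => - (row i (1%:M - A))^T
  | inl (inr j) => (row j B)^T
  | inr i => - (row i 1%:M)^T
  end.

Definition primal_rhs (k : 'I_n + 'I_m + 'I_n) : R :=
  match k with inl (inl i) => - cc i 0 | inl (inr j) => rr j 0 | inr _ => 0 end.

Lemma primal_feasibleE X :
  primal_feasible A B cc rr X <-> forall k, dotv (primal_coef k) X <= primal_rhs k.
Proof.
split => [[cX [BX X_ge0]] [[i | j] | i] | X_sol].
- by rewrite /= dotvNl dotv_row lerN2 cX.
- by rewrite /= dotv_row BX.
- by rewrite /= dotvNl dotv_row mul1mx oppr_le0 X_ge0.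
split; [move=> i | split=> [j | i]]; [move: (X_sol (inl (inl i))) |
  move: (X_sol (inl (inr j))) | move: (X_sol (inr i))];
  by rewrite /= ?dotvNl dotv_row ?mul1mx ?lerN2 ?oppr_le0.
Qed.

Lemma primal_coef_comb (y : 'I_n + 'I_m + 'I_n -> R) :
  \sum_k y k *: primal_coef k =
  - ((1%:M - A)^T *m \col_i y (inl (inl i))) + B^T *m \col_j y (inl (inr j))
  - \col_i y (inr i).
Proof.
rewrite !big_sumType /=.
under eq_bigr do rewrite scalerN.
under [X in _ + X]eq_bigr do rewrite scalerN.
by rewrite !sumrN !sum_scale_row trmx1 mul1mx.
Qed.

Lemma primal_rhs_comb (y : 'I_n + 'I_m + 'I_n -> R) :
  \sum_k y k * primal_rhs k =
  dotv rr (\col_j y (inl (inr j))) - dotv cc (\col_i y (inl (inl i))).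
Proof.
rewrite !big_sumType /= !dotv_col.
under [X in _ + X = _]eq_bigr do rewrite mulr0.
under eq_bigr do rewrite mulrN.
by rewrite big1_eq addr0 sumrN addrC.
Qed.

Lemma strong_duality xs : primal_argmin A B pp cc rr xs ->
  exists L V, dual_feasible A B pp L V /\ dotv pp xs <= dotv cc L - dotv rr V.
Proof.
move=> [xs_feas xs_opt].
have [|X /primal_feasibleE X_feas|y [y_ge0 y_comb y_rhs]] :=
  @optimum_multipliers _ _ primal_coef primal_rhs (- pp) xs.
- exact/primal_feasibleE.
- by rewrite !dotvNl lerN2; exact: xs_opt.
rewrite primal_coef_comb in y_comb; rewrite primal_rhs_comb dotvNl in y_rhs.
set L := \col_i y (inl (inl i)) in y_comb y_rhs.
set V := \col_j y (inl (inr j)) in y_comb y_rhs.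
set W := \col_i y (inr i) in y_comb.
have dual_eq : (1%:M - A)^T *m L - B^T *m V = pp - W.
  by rewrite -[pp]opprK -y_comb !opprD !opprK addrK.
exists L, V; split; [split; [|split] | lra].
- by move=> i; rewrite dual_eq !mxE lerBlDr lerDl.
- by move=> i; rewrite mxE.
- by move=> j; rewrite mxE.
Qed.

Lemma lp_optimality xs ls vs :
  primal_argmin A B pp cc rr xs /\ dual_argmax A B pp cc rr ls vs <->
  [/\ primal_feasible A B cc rr xs, dual_feasible A B pp ls vs
     & dotv pp xs = dotv cc ls - dotv rr vs].
Proof.
split => [[[xs_feas xs_opt] [lv_feas lv_opt]] | [xs_feas lv_feas gap]].
  have [L [V [LV_feas gap]]] := strong_duality (conj xs_feas xs_opt).
  split => //; have := lv_opt L V LV_feas; have := weak_duality xs_feas lv_feas; lra.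
split; split => //.
  by move=> X X_feas; have := weak_duality X_feas lv_feas; lra.
by move=> L V LV_feas; have := weak_duality xs_feas LV_feas; lra.
Qed.

End LinearProgram.

Lemma lev_sub0 k (u v : 'cV[R]_k) : lev (u - v) 0 <-> lev u v.
Proof. by split=> uv i; have := uv i; rewrite !mxE subr_le0. Qed.

Lemma vi_orthant k (g x0 : 'cV[R]_k) : nonnegv x0 ->
  (forall x, nonnegv x -> dotv g (x - x0) <= 0) <-> lev g 0 /\ dotv g x0 = 0.
Proof.
move=> x0_ge0; split => [vi | [g_le0 gx0] x x_ge0]; last first.
  by rewrite dotvBr gx0 subr0; have := dotv_le g_le0 x_ge0; rewrite dotv0l.
have shift_ge0 x : nonnegv x -> nonnegv (x0 + x).
  by move=> x_ge0 i; rewrite mxE addr_ge0.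
split=> [j | ].
  have /shift_ge0/vi : nonnegv (delta_mx j 0 : 'cV[R]_k) by move=> i; rewrite mxE ler0n.
  by rewrite addrC addKr dotv_delta mxE.
have /vi : nonnegv (0 : 'cV[R]_k) by move=> i; rewrite mxE.
have := vi _ (shift_ge0 _ x0_ge0); rewrite addrK dotvBr dotv0r; lra.
Qed.

Lemma vi_Omega n m (G : 'cV[R]_n * 'cV[R]_n * 'cV[R]_m) xs ls vs :
  in_Omega (xs, ls, vs) ->
  (forall y, in_Omega y -> dot3 G (y.1.1 - xs, y.1.2 - ls, y.2 - vs) <= 0) <->
  [/\ lev G.1.1 0, lev G.1.2 0, lev G.2 0 & dot3 G (xs, ls, vs) = 0].
Proof.
move=> [/= xs_ge0 [ls_ge0 vs_ge0]]; split => [vi | [G1 G2 G3 Gys]].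
  have /vi_orthant [//|G1_le0 G1xs] : forall x, nonnegv x -> dotv G.1.1 (x - xs) <= 0.
    by move=> x x_ge0; have := vi (x, ls, vs) (conj x_ge0 (conj ls_ge0 vs_ge0));
      rewrite /dot3 /= !subrr !dotv0r !addr0.
  have /vi_orthant [//|G2_le0 G2ls] : forall l, nonnegv l -> dotv G.1.2 (l - ls) <= 0.
    by move=> l l_ge0; have := vi (xs, l, vs) (conj xs_ge0 (conj l_ge0 vs_ge0));
      rewrite /dot3 /= !subrr !dotv0r add0r addr0.
  have /vi_orthant [//|G3_le0 G3vs] : forall v, nonnegv v -> dotv G.2 (v - vs) <= 0.
    by move=> v v_ge0; have := vi (xs, ls, v) (conj xs_ge0 (conj ls_ge0 v_ge0));
      rewrite /dot3 /= !subrr !dotv0r !add0r.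
  by split => //; rewrite /dot3 /= G1xs G2ls G3vs !addr0.
move=> [[x l] v] [/= x_ge0 [l_ge0 v_ge0]]; move: Gys; rewrite /dot3 /= !dotvBr.
have := dotv_le G1 x_ge0; have := dotv_le G2 l_ge0; have := dotv_le G3 v_ge0.
rewrite !dotv0l; lra.
Qed.

Lemma dot3_gmap n m (A : 'M[R]_n) (B : 'M[R]_(m, n)) p c r x l v :
  dot3 (gmap A B p c r (x, l, v)) (x, l, v) =
  dotv (c l) l - dotv (r v) v - dotv (p x) x.
Proof.
rewrite /dot3 /= !dotvBl !dotv_trmx (dotvC ((1%:M - A) *m x)) (dotvC (B *m x)).
lra.
Qed.

End LinearInequalities.

Theorem theorem1 (R : realType) (n m : nat) (hn : (0 < n)%N) (hm : (0 < m)%N)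
  (A : 'M[R]_n) (B : 'M[R]_(m, n))
  (p c : 'cV[R]_n -> 'cV[R]_n) (r : 'cV[R]_m -> 'cV[R]_m)
  (hA0r : no_zero_rows A) (hA0c : no_zero_cols A) (hAprod : productive A)
  (hB0r : no_zero_rows B) (hB0c : no_zero_cols B)
  (hp : maps_orthant p) (hc : maps_orthant c) (hr : maps_orthant r)
  (xs ls : 'cV[R]_n) (vs : 'cV[R]_m)
  (hys : in_Omega (xs, ls, vs)) :
  (primal_argmin A B (p xs) (c ls) (r vs) xs /\
   dual_argmax A B (p xs) (c ls) (r vs) ls vs)
  <->
  (forall y : 'cV[R]_n * 'cV[R]_n * 'cV[R]_m, in_Omega y ->
     dot3 (gmap A B p c r (xs, ls, vs)) (y.1.1 - xs, y.1.2 - ls, y.2 - vs) <= 0).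
Proof.
case: (hys) => /= xs_ge0 [ls_ge0 vs_ge0].
rewrite lp_optimality vi_Omega // dot3_gmap /= [_ - p xs - _]addrAC.
split => [[[cX [BX _]] [dual _] gap] | [/lev_sub0 dual /lev_sub0 cX /lev_sub0 BX gap]].
  by split; rewrite ?lev_sub0 //; lra.
by split => //; lra.
Qed.
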